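(* Let $w\geqslant2$ and $h=2^d$ with $d\in\mathbb{N}$. Then $r(\mathcal{H}_{h,w})=h$, where $\mathcal{H}_{h,w}$ is the set of fast Hough transform patterns on the $h\times w$ image.
   Context: Image: the set $I$ of $wh$ pixels $p_{ij}$, $i=0,\dots,h-1$ (row, counted from the bottom), $j=0,\dots,w-1$ (column). A pattern is a nonempty subset of $I$; a pattern set is a nonempty set of distinct patterns. For a pattern set $\mathcal{T}$, its intersection area is $S(\mathcal{T})=|\mathcal{T}|\cdot\bigl|\bigcap_{T\in\mathcal{T}}T\bigr|$ and its self-intersection measure is $r(\mathcal{T})=\max_{\varnothing\neq\mathcal{R}\subseteq\mathcal{T}}S(\mathcal{R})$. FHT patterns: for a pattern $T$ containing exactly one pixel in each of its rows, let $\Delta(T)=(j_{top}-j_{bot})\bmod w$, where $j_{top},j_{bot}$ are the column indices of the topmost and bottommost pixels of $T$, and let $\mathit{tran}_{a,b}(T)=\{p_{i+a,\,(j+b)\bmod w}\mid p_{ij}\in T\}$. Define $\mathcal{H}_0=\{\{p_{00}\},\{p_{01}\},\dots,\{p_{0,w-1}\}\}$ and, for $k=1,\dots,d$, $\mathcal{H}_k=\{T\cup\mathit{tran}_{2^{k-1},\,\Delta(T)+s}(T)\mid T\in\mathcal{H}_{k-1},\ s\in\{0,1\}\}$; $\mathcal{H}_{h,w}=\mathcal{H}_d$. *)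

From mathcomp Require Import all_boot.
Set Implicit Arguments. Unset Strict Implicit. Unset Printing Implicit Defensive.

Section FHT.
Variables h w : nat.

(* pixel p_{ij}: row i (from the bottom), column j *)
Definition pixel := ('I_h * 'I_w)%type.
Definition pattern := {set pixel}.

Definition tran (a b : nat) (T : pattern) : pattern :=
  [set p : pixel | [exists q in T, (q.1 + a == p.1 :> nat) && ((q.2 + b) %% w == p.2 :> nat)]].

Definition top_pix (T : pattern) : option pixel :=
  [pick p in T | [forall q in T, (q.1 <= p.1)%N]].
Definition bot_pix (T : pattern) : option pixel :=
  [pick p in T | [forall q in T, (p.1 <= q.1)%N]].
Definition jtop (T : pattern) : nat := odflt 0 (omap (fun p : pixel => val p.2) (top_pix T)).
Definition jbot (T : pattern) : nat := odflt 0 (omap (fun p : pixel => val p.2) (bot_pix T)).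

Definition Delta (T : pattern) : nat := (jtop T + w - jbot T) %% w.

Fixpoint FHT (k : nat) : {set pattern} :=
  match k with
  | 0 => [set [set p : pixel | (p.1 == 0 :> nat) && (p.2 == j)] | j : 'I_w]
  | k'.+1 => [set T :|: tran (2 ^ k') (Delta T + nat_of_bool s) T
               | T in FHT k', s in [set: bool]]
  end.

Definition Sarea (R : {set pattern}) : nat := #|R| * #|\bigcap_(T in R) T|.
Definition rself (TT : {set pattern}) : nat :=
  \max_(R in powerset TT | R != set0) Sarea R.

End FHT.

Definition Hhw (d w : nat) : {set pattern (2 ^ d) w} := FHT (2 ^ d) w d.

From mathcomp Require Import all_boot zify.
Set Implicit Arguments. Unset Strict Implicit. Unset Printing Implicit Defensive.

(* Every pattern of H_k has exactly one pixel in each row below 2^k.  A pattern of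
   H_(k+1) is determined by its lower half A, which lies in H_k, and one bit s: its upper
   half is A moved up by 2^k and cyclically right by Delta A + s.  Moved back down, the
   upper half is a cyclic shift of A, hence again in H_k, since cyclic shifts preserve
   Delta and H_k.  To bound |R| |/\R| by 2^k, induct on k and split /\R into its lower
   and upper halves.  A common pixel in the upper half fixes the bit, so R maps
   injectively to its lower halves; a common pixel in the lower half does the same for
   the upper halves.  When one half of /\R is empty, the bit costs exactly the factor 2
   that the step from 2^k to 2^(k+1) allows.  One pattern with 2^k pixels gives the
   lower bound. *)

Lemma card_le_double (aT rT : finType) (A : {set aT}) (f : aT -> rT) (g : bool -> rT -> aT) :
  {in A, forall x, exists s, x = g s (f x)} -> #|A| <= 2 * #|f @: A|.
Proof.
move=> reprA; rewrite -card_bool -cardsT -cardsX.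
apply: leq_trans (leq_imset_card (fun sy => g sy.1 sy.2) _).
apply/subset_leq_card/subsetP => x xA; have [s ->] := reprA x xA.
by apply/imsetP; exists (s, f x); rewrite // in_setX in_setT imset_f.
Qed.

Lemma bigcap_imset_homo (T : finType) (f : {set T} -> {set T}) (A : {set {set T}}) :
  {homo f : X Y / X \subset Y} -> f (\bigcap_(X in A) X) \subset \bigcap_(Y in f @: A) Y.
Proof.
move=> f_homo; rewrite big_imset_idem; last exact: setIid.
by apply/bigcapsP => X XA; apply/f_homo/bigcap_inf.
Qed.

Section FastHoughPatterns.
Variables h w : nat.
Hypothesis w_gt1 : 1 < w.
Implicit Types (p q : pixel h w) (A B T : pattern h w) (R : {set pattern h w}).

Local Notation rot c := (@tran h w 0 c).

Lemma w_gt0 : 0 < w. Proof. exact: ltnW. Qed.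

Lemma pixel_eq p q : p.1 = q.1 :> nat -> p.2 = q.2 :> nat -> p = q.
Proof. by case: p q => [? ?] [? ?] /= /val_inj-> /val_inj->. Qed.

Lemma tranP a b T p : reflect (exists2 q : pixel h w, q \in T &
   q.1 + a = p.1 :> nat /\ (q.2 + b) %% w = p.2 :> nat) (p \in tran a b T).
Proof.
rewrite inE; apply: (iffP existsP) => [[q /andP[qT /andP[/eqP e1 /eqP e2]]]|[q qT [e1 e2]]].
  by exists q.
by exists q; rewrite qT e1 e2 !eqxx.
Qed.

Lemma mem_tran a b T q : q \in T -> q.1 + a < h -> exists2 p : pixel h w,
  p \in tran a b T & p.1 = q.1 + a :> nat /\ p.2 = (q.2 + b) %% w :> nat.
Proof.
move=> qT lt_qa.
exists (Ordinal lt_qa, Ordinal (ltn_pmod (q.2 + b) w_gt0)) => //.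
by apply/tranP; exists q.
Qed.

Lemma tranD a b a' b' T : tran a b (tran a' b' T) = tran (a' + a) (b' + b) T.
Proof.
apply/setP => p; apply/tranP/tranP.
- case=> q' /tranP [q qT [e1 e2]] [e3 e4].
  by exists q => //; rewrite -e3 -e4 -e1 -e2 addnA modnDml addnA.
- case=> q qT [e1 e2].
  have lt_qa : q.1 + a' < h by move: (ltn_ord p.1); rewrite -e1; lia.
  have [q' q'T [f1 f2]] := mem_tran b' qT lt_qa.
  by exists q' => //; rewrite f1 f2 modnDml -!addnA.
Qed.

Lemma tranU a b A B : tran a b (A :|: B) = tran a b A :|: tran a b B.
Proof.
apply/setP => p; rewrite in_setU; apply/tranP/orP.
- by case=> q; rewrite in_setU => /orP[qA|qB] e; [left|right]; apply/tranP; exists q.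
- by case=> /tranP[q qAB e]; exists q => //; rewrite inE qAB ?orbT.
Qed.

Lemma tran_modr a b T : tran a (b %% w) T = tran a b T.
Proof.
by apply/setP => p; apply/tranP/tranP => -[q qT [e1 e2]]; exists q;
  rewrite ?modnDmr // -modnDmr.
Qed.

Lemma tran0 T : tran 0 0 T = T.
Proof.
apply/setP => p; apply/tranP/idP => [[q qT [e1 e2]]|pT].
  by rewrite (@pixel_eq p q) // -?e1 -?e2 ?addn0 ?modn_small.
by exists p; rewrite ?addn0 ?modn_small.
Qed.

Lemma rotK c : cancel (rot c) (rot (w - c %% w)).
Proof.
move=> T; rewrite tranD -tran_modr -modnDml subnKC ?modnn ?tran0 //.
exact/ltnW/ltn_pmod/w_gt0.
Qed.

Lemma rot_inj c : injective (rot c).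
Proof. exact: can_inj (rotK c). Qed.

(* This is where [1 < w] is needed: the two choices of the bit give different shifts. *)
Lemma bit_mod_inj D (s1 s2 : bool) : D + s1 = D + s2 %[mod w] -> s1 = s2.
Proof.
by move/eqP; rewrite eqn_modDl; case: s1 s2 => [] [] //=; rewrite mod0n modn_small.
Qed.

Definition one_per_row n T := [/\ forall p, p \in T -> p.1 < n,
  {in T &, injective (fun p => p.1)} &
  forall i, i < n -> exists2 p : pixel h w, p \in T & p.1 = i :> nat].

Lemma one_per_row_le n T : one_per_row n T -> n <= h.
Proof.
case: n => // n [_ _ /(_ n (ltnSn n))[p _ <-]]; exact: ltn_ord.
Qed.

Lemma one_per_row_card n T : one_per_row n T -> n <= #|T|.
Proof.
move=> rowsT; have [_ row_inj row_ex] := rowsT.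
have le_nh := one_per_row_le rowsT.
have widen_inj : injective (widen_ord le_nh).
  by move=> i j [/val_inj].
rewrite -[n]card_ord -(card_imset _ widen_inj) -(card_in_imset row_inj).
apply/subset_leq_card/subsetP => _ /imsetP[i _ ->].
have [p pT pi] := row_ex i (ltn_ord i).
by apply/imsetP; exists p => //; apply: val_inj.
Qed.

Lemma one_per_row1 T p : one_per_row 1 T -> p \in T -> T = [set p].
Proof.
case=> row_lt row_inj _ pT; apply/setP => q; rewrite inE.
apply/idP/eqP => [qT|-> //]; apply: row_inj => //; apply: val_inj => /=.
by have := row_lt q qT; have := row_lt p pT; lia.
Qed.

Lemma one_per_row_rot n c T : one_per_row n T -> one_per_row n (rot c T).
Proof.
case=> row_lt row_inj row_ex; split.
- by move=> p /tranP[q /row_lt lt_qn [e _]]; lia.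
- move=> p p' /tranP[q qT [e1 e2]] /tranP[q' q'T [f1 f2]] /(congr1 val) /= e.
  have qq' : q = q' by apply: row_inj => //; apply: val_inj => /=; lia.
  by apply: pixel_eq => //; rewrite -e2 -f2 qq'.
- move=> i lt_in; have [q qT qi] := row_ex i lt_in.
  have [p pT [pq _]] := mem_tran (a := 0) c qT ltac:(rewrite addn0; exact: ltn_ord).
  by exists p; rewrite // pq addn0.
Qed.

Lemma one_per_row_double n b A : 2 * n <= h ->
  one_per_row n A -> one_per_row (2 * n) (A :|: tran n b A).
Proof.
move=> le_2nh [row_lt row_inj row_ex]; split.
- by move=> p; rewrite in_setU => /orP[/row_lt|/tranP[q /row_lt ? [e _]]]; lia.
- move=> p q; rewrite !in_setU => /orP[pA|/tranP[p' p'A [e1 e2]]]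
     /orP[qA|/tranP[q' q'A [f1 f2]]] /(congr1 val) /= e.
  + by apply: row_inj => //; apply: val_inj.
  + by have := row_lt _ pA; lia.
  + by have := row_lt _ qA; lia.
  + have pq' : p' = q' by apply: row_inj => //; apply: val_inj => /=; lia.
    by apply: pixel_eq => /=; [lia | rewrite -e2 -f2 pq'].
- move=> i lt_i2n; case: (ltnP i n) => [lt_in|le_ni].
    by have [p pA pi] := row_ex i lt_in; exists p; rewrite // in_setU pA.
  have [q qA qi] := row_ex (i - n) ltac:(lia).
  have [p pT [pq _]] := mem_tran (a := n) b qA ltac:(lia).
  by exists p; rewrite ?in_setU ?pT ?orbT // pq qi subnK.
Qed.

Lemma tran_row_modr n a b1 b2 A p : one_per_row n A ->
  p \in tran a b1 A -> p \in tran a b2 A -> b1 = b2 %[mod w].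
Proof.
case=> _ row_inj _ /tranP[q1 q1A [e1 e2]] /tranP[q2 q2A [f1 f2]].
have q12 : q1 = q2 by apply: row_inj => //; apply: val_inj => /=; lia.
by apply/eqP; rewrite -(eqn_modDl q1.2) e2 q12 f2.
Qed.

Lemma jtop_one_per_row n T p : one_per_row n T -> p \in T -> p.1 = n.-1 :> nat ->
  jtop T = p.2.
Proof.
case=> row_lt row_inj _ pT p_top.
have p_max : [forall q in T, q.1 <= p.1].
  by apply/forall_inP => q /row_lt /=; lia.
rewrite /jtop /top_pix; case: pickP => [q /andP[qT /forall_inP q_max]|/(_ p)] /=.
  move: (q_max p pT) (row_lt q qT) => /= le_pq lt_qn.
  by rewrite (@row_inj q p) //; apply: val_inj => /=; lia.
by rewrite pT p_max.
Qed.

Lemma jbot_one_per_row n T p : one_per_row n T -> p \in T -> p.1 = 0 :> nat ->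
  jbot T = p.2.
Proof.
case=> _ row_inj _ pT p_bot.
have p_min : [forall q in T, p.1 <= q.1] by apply/forall_inP => q _; rewrite p_bot.
rewrite /jbot /bot_pix; case: pickP => [q /andP[qT /forall_inP q_min]|/(_ p)] /=.
  move: (q_min p pT) => /= le_qp.
  by rewrite (@row_inj q p) //; apply: val_inj => /=; lia.
by rewrite pT p_min.
Qed.

Lemma modn_subDr x y c : y < w -> ((x + c) %% w + w - (y + c) %% w) %% w = (x + w - y) %% w.
Proof.
move=> lt_yw; apply/eqP.
have lt_yc : (y + c) %% w < w := ltn_pmod _ w_gt0.
rewrite -(eqn_modDr ((y + c) %% w)) subnK; last by lia.
rewrite modnDr modn_mod modnDmr.
have -> : x + w - y + (y + c) = x + c + w by lia.
by rewrite modnDr.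
Qed.

Lemma Delta_rot n c A : 0 < n -> one_per_row n A -> Delta (rot c A) = Delta A.
Proof.
move=> n_gt0 rowsA; have rows_rot := one_per_row_rot c rowsA.
have [_ _ row_ex] := rowsA.
have [pt ptA pt_top] := row_ex n.-1 ltac:(lia).
have [pb pbA pb_bot] := row_ex 0 n_gt0.
have [pt' pt'A [pt'_top pt'_col]] := mem_tran (a := 0) c ptA ltac:(rewrite addn0 //).
have [pb' pb'A [pb'_bot pb'_col]] := mem_tran (a := 0) c pbA ltac:(rewrite addn0 //).
rewrite /Delta (jtop_one_per_row rowsA ptA) // (jbot_one_per_row rowsA pbA) //.
rewrite (jtop_one_per_row rows_rot pt'A) ?pt'_top ?addn0 //.
rewrite (jbot_one_per_row rows_rot pb'A) ?pb'_bot ?addn0 //.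
by rewrite pt'_col pb'_col modn_subDr.
Qed.

Lemma one_per_row_FHT k T : 2 ^ k <= h -> T \in FHT h w k -> one_per_row (2 ^ k) T.
Proof.
elim: k T => [|k IH] T le_kh.
  case/imsetP => j _ ->; split.
  - by move=> p; rewrite inE => /andP[/eqP -> _].
  - move=> p q; rewrite !inE => /andP[/eqP p_bot /eqP p_col] /andP[/eqP q_bot /eqP q_col] _.
    by apply: pixel_eq; rewrite ?p_bot ?q_bot ?p_col ?q_col.
  - move=> i; rewrite ltnS leqn0 => /eqP ->.
    by exists (Ordinal le_kh, j); rewrite ?inE /= ?eqxx.
case/imset2P => A s AH _ ->; rewrite expnS in le_kh *.
by apply: one_per_row_double => //; apply: IH AH; lia.
Qed.

Lemma rot_FHT k c T : 2 ^ k <= h -> T \in FHT h w k -> rot c T \in FHT h w k.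
Proof.
elim: k c T => [|k IH] c T le_kh.
  case/imsetP => j _ ->; apply/imsetP; exists (Ordinal (ltn_pmod (j + c) w_gt0)) => //.
  apply/setP => p; rewrite [RHS]inE; apply/tranP/andP.
  - case=> q; rewrite inE => /andP[/eqP q_bot /eqP q_col] [e1 e2].
    by split; apply/eqP; [rewrite -e1 addn0 q_bot | apply: val_inj; rewrite /= -e2 q_col].
  - case=> /eqP p_bot /eqP p_col; exists (p.1, j); first by rewrite inE /= p_bot !eqxx.
    by rewrite /= addn0 p_col.
case/imset2P => B s BH _ ->.
have le_kh' : 2 ^ k <= h by move: le_kh; rewrite expnS; lia.
rewrite tranU tranD addn0; apply/imset2P; exists (rot c B) s; rewrite ?inE ?IH //.
rewrite tranD add0n (Delta_rot _ (expn_gt0 2 k) (one_per_row_FHT le_kh' BH)).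
by rewrite addnC.
Qed.

Lemma FHT_neq0 k : FHT h w k != set0.
Proof.
elim: k => [|k /set0Pn[A AH]]; apply/set0Pn.
  by exists [set p : pixel h w | (p.1 == 0 :> nat) && (p.2 == Ordinal w_gt0)]; apply: imset_f.
by exists (A :|: tran (2 ^ k) (Delta A + false) A); apply/imset2P; exists A false.
Qed.

Definition lower n T := [set p in T | p.1 < n].

Definition shift_down n T :=
  [set p : pixel h w | [exists q in T, (q.1 == p.1 + n :> nat) && (q.2 == p.2)]].

Definition fht_step n (s : bool) A := A :|: tran n (Delta A + s) A.

Lemma shift_downP n T p : reflect (exists2 q : pixel h w, q \in T &
  q.1 = p.1 + n :> nat /\ q.2 = p.2) (p \in shift_down n T).
Proof.
rewrite inE; apply: (iffP existsP) => [[q /andP[qT /andP[/eqP e1 /eqP e2]]]|[q qT [e1 e2]]].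
  by exists q.
by exists q; rewrite qT e1 e2 !eqxx.
Qed.

Lemma lower_double n b A : one_per_row n A -> lower n (A :|: tran n b A) = A.
Proof.
case=> row_lt _ _; apply/setP => p; rewrite inE in_setU.
case pA: (p \in A); first by rewrite (row_lt p pA).
by apply/negbTE/andP => -[/tranP[q _ [e _]]] /=; lia.
Qed.

Lemma shift_down_double n b A : 2 * n <= h -> one_per_row n A ->
  shift_down n (A :|: tran n b A) = rot b A.
Proof.
move=> le_2nh [row_lt _ _]; apply/setP => p; apply/shift_downP/tranP.
- case=> q; rewrite in_setU => /orP[/row_lt lt_qn|/tranP[q' q'A [e1 e2]]] [f1 f2].
    by lia.
  by exists q' => //; rewrite addn0 e2 f2; split => //; lia.
- case=> q qA [e1 e2]; rewrite addn0 in e1.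
  have [q' q'T [f1 f2]] := mem_tran (a := n) b qA ltac:(have := row_lt q qA; lia).
  exists q'; first by rewrite in_setU q'T orbT.
  by split; [rewrite f1 e1 | apply: val_inj; rewrite /= f2 e2].
Qed.

Lemma lower_homo n : {homo lower n : X Y / X \subset Y}.
Proof.
by move=> X Y /subsetP sXY; apply/subsetP => p; rewrite !inE => /andP[/sXY-> ->].
Qed.

Lemma shift_down_homo n : {homo shift_down n : X Y / X \subset Y}.
Proof.
move=> X Y /subsetP sXY; apply/subsetP => p /shift_downP[q /sXY qY e].
by apply/shift_downP; exists q.
Qed.

Lemma card_le_lower_shift_down n (X : pattern h w) : #|X| <= #|lower n X| + #|shift_down n X|.
Proof.
rewrite -(cardsID [set p : pixel h w | p.1 < n] X).
have -> : X :&: [set p : pixel h w | p.1 < n] = lower n X by apply/setP => p; rewrite !inE.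
rewrite leq_add2l.
pose down p : pixel h w := (Ordinal (leq_ltn_trans (leq_subr n p.1) (ltn_ord p.1)), p.2).
have down_inj : {in X :\: [set p : pixel h w | p.1 < n] &, injective down}.
  move=> p q; rewrite !inE -!leqNgt => /andP[le_np _] /andP[le_nq _].
  move/(congr1 (fun x : pixel h w => (val x.1, val x.2))) => /= -[e1 e2].
  by apply: pixel_eq => //; lia.
rewrite -(card_in_imset down_inj); apply/subset_leq_card/subsetP => _ /imsetP[p pXn ->].
rewrite !inE -leqNgt in pXn; case/andP: pXn => le_np pX.
by apply/shift_downP; exists p; rewrite //= subnK.
Qed.

Section NextLevel.
Variable k : nat.
Hypothesis le_kh : 2 * 2 ^ k <= h.
Local Notation K := (2 ^ k).

Let le_Kh : K <= h. Proof. lia. Qed.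

Lemma mem_FHTS T : T \in FHT h w k.+1 ->
  exists A s, [/\ A \in FHT h w k, one_per_row K A & T = fht_step K s A].
Proof.
case/imset2P => A s AH _ ->; exists A, s; split => //.
exact: one_per_row_FHT AH.
Qed.

Lemma lower_FHTS T : T \in FHT h w k.+1 -> lower K T \in FHT h w k.
Proof. by case/mem_FHTS => A [s [AH rowsA ->]]; rewrite lower_double. Qed.

Lemma shift_down_FHTS T : T \in FHT h w k.+1 -> shift_down K T \in FHT h w k.
Proof.
case/mem_FHTS => A [s [AH rowsA ->]]; rewrite shift_down_double //.
exact: rot_FHT AH.
Qed.

Lemma lower_FHTS_repr T : T \in FHT h w k.+1 ->
  exists s, T = fht_step K s (lower K T).
Proof. by case/mem_FHTS => A [s [_ rowsA ->]]; exists s; rewrite lower_double. Qed.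

Lemma lower_inj_FHTS R p : R \subset FHT h w k.+1 -> p \in \bigcap_(T in R) T ->
  K <= p.1 -> {in R &, injective (lower K)}.
Proof.
move=> subR pI le_Kp T1 T2 T1R T2R eq_low.
have [pT1 pT2] := (bigcapP pI T1 T1R, bigcapP pI T2 T2R).
have [s1 e1] := lower_FHTS_repr (subsetP subR T1 T1R).
have [s2 e2] := lower_FHTS_repr (subsetP subR T2 T2R).
have rowsA := one_per_row_FHT le_Kh (lower_FHTS (subsetP subR T1 T1R)).
rewrite -eq_low in e2; set A := lower K T1 in e1 e2 rowsA.
have upper_tran (s : bool) : p \in fht_step K s A -> p \in tran K (Delta A + s) A.
  by case: rowsA => row_lt _ _; rewrite in_setU => /orP[/row_lt /=|//]; lia.
rewrite e1 in pT1; rewrite e2 in pT2.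
have /bit_mod_inj eq_s := tran_row_modr rowsA (upper_tran _ pT1) (upper_tran _ pT2).
by rewrite e1 e2 eq_s.
Qed.

Lemma shift_down_inj_FHTS R p : R \subset FHT h w k.+1 -> p \in \bigcap_(T in R) T ->
  p.1 < K -> {in R &, injective (shift_down K)}.
Proof.
move=> subR pI lt_pK T1 T2 T1R T2R.
move: (bigcapP pI T1 T1R) (bigcapP pI T2 T2R).
move: (subsetP subR T1 T1R) (subsetP subR T2 T2R).
move=> /mem_FHTS[A1 [s1 [_ rowsA1 ->]]] /mem_FHTS[A2 [s2 [_ rowsA2 ->]]] pT1 pT2.
rewrite !shift_down_double // => eq_B.
have eq_Delta : Delta A1 = Delta A2.
  rewrite -(Delta_rot (Delta A1 + s1) (expn_gt0 2 k) rowsA1) eq_B.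
  exact: Delta_rot (expn_gt0 2 k) rowsA2.
have lower_mem A s : one_per_row K A -> p \in fht_step K s A -> p \in A.
  by case=> row_lt _ _; rewrite in_setU => /orP[//|/tranP[q _ [e _]]]; lia.
have [x1 x1B [x1_row x1_col]] := mem_tran (a := 0) (Delta A1 + s1)
  (lower_mem _ _ rowsA1 pT1) ltac:(rewrite addn0 //).
have [x2 x2B [x2_row x2_col]] := mem_tran (a := 0) (Delta A2 + s2)
  (lower_mem _ _ rowsA2 pT2) ltac:(rewrite addn0 //).
rewrite eq_B in x1B.
have [_ rowB_inj _] := one_per_row_rot (Delta A2 + s2) rowsA2.
have x12 : x1 = x2 by apply: rowB_inj => //; apply: val_inj; rewrite /= x1_row x2_row.
have eq_s : s1 = s2.
  apply: (@bit_mod_inj (p.2 + Delta A1)).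
  by rewrite -!addnA -x1_col eq_Delta -x2_col x12.
by rewrite eq_Delta eq_s in eq_B *; rewrite (rot_inj eq_B).
Qed.

Lemma card_le_lower_FHTS R : R \subset FHT h w k.+1 -> #|R| <= 2 * #|lower K @: R|.
Proof.
move/subsetP => subR.
by apply: (card_le_double (g := fun s => fht_step K s)) => T /subR/lower_FHTS_repr.
Qed.

Lemma card_le_shift_down_FHTS R : R \subset FHT h w k.+1 -> #|R| <= 2 * #|shift_down K @: R|.
Proof.
move/subsetP => subR.
apply: (card_le_double (g := fun s B => fht_step K s (rot (w - (Delta B + s) %% w) B))).
move=> T /subR/mem_FHTS[A [s [_ rowsA ->]]]; exists s.
by rewrite shift_down_double // (Delta_rot _ (expn_gt0 2 k) rowsA) rotK.
Qed.

Lemma Sarea_FHTS_le R : R \subset FHT h w k.+1 -> R != set0 ->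
  (forall R', R' \subset FHT h w k -> R' != set0 -> Sarea R' <= K) -> Sarea R <= 2 * K.
Proof.
move=> subR R0 IH; have memR T : T \in R -> T \in FHT h w k.+1 := subsetP subR T.
set L := lower K @: R; set D := shift_down K @: R; set I := \bigcap_(T in R) T.
have IHL : #|L| * #|\bigcap_(A in L) A| <= K.
  apply: IH; last by rewrite imset_eq0.
  by apply/subsetP => _ /imsetP[T TR ->]; exact/lower_FHTS/memR.
have IHD : #|D| * #|\bigcap_(B in D) B| <= K.
  apply: IH; last by rewrite imset_eq0.
  by apply/subsetP => _ /imsetP[T TR ->]; exact/shift_down_FHTS/memR.
have lowI := subset_leq_card (bigcap_imset_homo R (@lower_homo K)).
have upI := subset_leq_card (bigcap_imset_homo R (@shift_down_homo K)).
have cardI := card_le_lower_shift_down K I.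
have R_L := card_le_lower_FHTS subR; have R_D := card_le_shift_down_FHTS subR.
rewrite /Sarea -/I.
have [lowI0|[p]] := set_0Vmem (lower K I).
  rewrite lowI0 cards0 add0n in cardI.
  by apply: leq_trans (leq_mul R_D (leq_trans cardI upI)) _; rewrite -mulnA leq_pmul2l.
rewrite inE => /andP[pI lt_pK].
have [upI0|[q /shift_downP[p' p'I [p'_row _]]]] := set_0Vmem (shift_down K I).
  rewrite upI0 cards0 addn0 in cardI.
  by apply: leq_trans (leq_mul R_L (leq_trans cardI lowI)) _; rewrite -mulnA leq_pmul2l.
have lower_inj := lower_inj_FHTS subR p'I ltac:(by rewrite p'_row leq_addl).
have shift_inj := shift_down_inj_FHTS subR pI lt_pK.
apply: leq_trans (leq_mul (leqnn _) cardI) _.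
rewrite mulnDr mul2n -addnn -{1}(card_in_imset lower_inj) -(card_in_imset shift_inj).
exact: leq_add (leq_trans (leq_mul (leqnn _) lowI) IHL)
               (leq_trans (leq_mul (leqnn _) upI) IHD).
Qed.

End NextLevel.

Lemma Sarea_FHT0_le R : R \subset FHT h w 0 -> R != set0 -> Sarea R <= 1.
Proof.
move=> subR /set0Pn[T0 T0R]; rewrite /Sarea.
have [->|[p pI]] := set_0Vmem (\bigcap_(T in R) T); first by rewrite cards0 muln0.
have singleton T : T \in R -> T = [set p].
  move=> TR; have le_1h : 2 ^ 0 <= h := leq_ltn_trans (leq0n p.1) (ltn_ord p.1).
  exact: one_per_row1 (one_per_row_FHT le_1h (subsetP subR T TR)) (bigcapP pI T TR).
have card_R : #|R| <= 1.
  rewrite -(cards1 [set p]); apply/subset_leq_card/subsetP => T /singleton ->.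
  exact: set11.
have card_I : #|\bigcap_(T in R) T| <= 1.
  by rewrite -(cards1 p) -(singleton T0 T0R); apply/subset_leq_card/bigcap_inf.
by rewrite -[1]/(1 * 1) leq_mul.
Qed.

Lemma Sarea_FHT_le k R : 2 ^ k <= h -> R \subset FHT h w k -> R != set0 -> Sarea R <= 2 ^ k.
Proof.
elim: k R => [|k IH] R le_kh; first exact: Sarea_FHT0_le.
rewrite expnS in le_kh * => subR R0.
by apply: (Sarea_FHTS_le le_kh subR R0) => R'; apply: IH; lia.
Qed.

Theorem rself_FHT k : 2 ^ k <= h -> rself (FHT h w k) = 2 ^ k.
Proof.
move=> le_kh; apply/eqP; rewrite eqn_leq; apply/andP; split.
  apply/bigmax_leqP => R /andP[]; rewrite powersetE; exact: Sarea_FHT_le.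
have /set0Pn[T TH] := FHT_neq0 k.
apply: (bigmax_sup [set T]).
  by rewrite powersetE sub1set TH; apply/set0Pn; exists T; rewrite set11.
rewrite /Sarea big_set1 cards1 mul1n; exact: one_per_row_card (one_per_row_FHT le_kh TH).
Qed.

End FastHoughPatterns.

Theorem lemma1 (d w : nat) : 2 <= w -> rself (Hhw d w) = 2 ^ d.
Proof. by move=> w_gt1; apply: rself_FHT. Qed.
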